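(* Let $R$ be a rational map of degree $2$ having two attracting fixed points and one repelling fixed point. Then: (i) If the multipliers of the two attracting fixed points are equal, say to $\lambda$, then $R$ is conjugate (by a Möbius map) to $N_{h,p}$ with $h=1-\lambda$ and $p(z)=z^2-1$. (ii) If one of the attracting fixed points is superattracting and the multiplier of the other attracting fixed point is $\frac{n}{m}$, where $m\in\mathbb{N}$ and $n\in\mathbb{N}\setminus\{0\}$, then $R$ is conjugate to $N_{h,p}$ with $h=m-n$ and $p(z)=(z-1)^{m-n}(z+1)^m$. (iii) If the ratio of the residue fixed point indices of $R$ at the two attracting fixed points is $\frac{k}{m}$ with $k,m\in\mathbb{N}$, then there exists $h\in\mathbb{C}\setminus\{0\}$ such that $R$ is conjugate to $N_{h,p}$ with $p(z)=(z-1)^k(z+1)^m$.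
   Context: For a polynomial $p$ and $h\in\mathbb{C}$, $N_{h,p}(z)=z-h\,\frac{p(z)}{p'(z)}$. The residue fixed point index of $R$ at a fixed point $z_0$ is $\iota(R,z_0)=\frac{1}{2\pi i}\oint_\gamma\frac{dz}{z-R(z)}$ for a small positively oriented loop $\gamma$ around $z_0$ enclosing no other fixed point; if the multiplier $\lambda\neq 1$, then $\iota(R,z_0)=\frac{1}{1-\lambda}$. *)

From HB Require Import structures.
From mathcomp Require Import all_boot all_order all_algebra.
From mathcomp Require Import complex.
From mathcomp Require Import Rstruct.
Set Implicit Arguments. Unset Strict Implicit. Unset Printing Implicit Defensive.
Import Order.TTheory GRing.Theory Num.Theory ComplexField.
Local Open Scope ring_scope.

Notation CC := (Rdefinitions.R[i]).

Section RatMap.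
Variable C : fieldType.

(* Points of the Riemann sphere: Some z is the finite point z, None is oo. *)
Notation sphere := (option C).

(* A rational function is given by a pair (P, Q) of polynomials, Q <> 0,
   representing P/Q; rnum/rden give the reduced (coprime) form. *)
Definition rnum (P Q : {poly C}) : {poly C} := P %/ gcdp P Q.
Definition rden (P Q : {poly C}) : {poly C} := Q %/ gcdp P Q.

Definition rdeg (P Q : {poly C}) : nat :=
  (maxn (size (rnum P Q)) (size (rden P Q))).-1.

Definition reval (P Q : {poly C}) (z : sphere) : sphere :=
  let P1 := rnum P Q in let Q1 := rden P Q in
  match z with
  | Some z0 => if Q1.[z0] == 0 then None else Some (P1.[z0] / Q1.[z0])
  | None =>
      if (size Q1 < size P1)%N then None
      else if (size P1 < size Q1)%N then Some 0
      else Some (lead_coef P1 / lead_coef Q1)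
  end.

Definition rderiv (P Q : {poly C}) (z0 : C) : C :=
  let P1 := rnum P Q in let Q1 := rden P Q in
  (P1^`() * Q1 - P1 * Q1^`()).[z0] / (Q1.[z0]) ^+ 2.

(* X^n p(1/X) *)
Definition recip (n : nat) (p : {poly C}) : {poly C} :=
  \poly_(i < n.+1) p`_(n - i).

(* Multiplier of P/Q at a fixed point z: the derivative at z in the standard
   chart; at oo one uses the chart w = 1/z, in which P1/Q1 (of degree d)
   becomes  w |-> 1/(P1/Q1)(1/w) = (w^d Q1(1/w)) / (w^d P1(1/w)). *)
Definition multiplier (P Q : {poly C}) (z : sphere) : C :=
  match z with
  | Some z0 => rderiv P Q z0
  | None =>
      let P1 := rnum P Q in let Q1 := rden P Q in
      let d := (maxn (size P1) (size Q1)).-1 in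
      rderiv (recip d Q1) (recip d P1) 0
  end.

(* Residue fixed point index at a fixed point with multiplier <> 1:
   iota(R, z0) = 1/(1 - lambda) (the value of the residue integral
   (1/2 pi i) \oint dz/(z - R z) in that case). *)
Definition residue_index (P Q : {poly C}) (z : sphere) : C :=
  (1 - multiplier P Q z)^-1.

Definition is_fixed (P Q : {poly C}) (z : sphere) : Prop := reval P Q z = z.

Definition mobius (a b c d : C) : sphere -> sphere :=
  reval (a *: 'X + b%:P) (c *: 'X + d%:P).

(* Newton-like map N_{h,p}(z) = z - h p(z)/p'(z) = (z p' - h p)/p' *)
Definition newton_num (h : C) (p : {poly C}) : {poly C} := 'X * p^`() - h *: p.
Definition newton_den (p : {poly C}) : {poly C} := p^`().

Definition mob_conjugate (F G : sphere -> sphere) : Prop :=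
  exists a b c d : C, a * d - b * c != 0 /\
    forall z : sphere, F (mobius a b c d z) = mobius a b c d (G z).

End RatMap.

(* A degree-2 map P/Q lifts to a pair H of binary quadratic forms; its fixed points become
   eigenlines H v = mu v, and by Euler's identity the multiplier there is J(v) / (2 mu^2),
   where J is the Jacobian determinant of H.  A linear change of variables moves the three
   fixed points to the lines of (1,1), (-1,1) and (1,0).  A quadratic map with these
   eigenlines has a single free coefficient, which the residue indices K/h and M/h at the
   first two points determine: up to a scalar the map becomes
   (h y^2 + (K-M) x y + (K+M-h) x^2, (K-M) y^2 + (K+M) x y).  This is the lift of N_{h,p}
   for p = (z-1)^K (z+1)^M once the common factor (z-1)^(K-1) (z+1)^(M-1) of p' and
   z p' - h p is cancelled.  Parts (i)-(iii) then only choose K, M and h. *)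

From HB Require Import structures.
From mathcomp Require Import all_boot all_order all_algebra.
From mathcomp Require Import complex.
From mathcomp Require Import Rstruct.
From mathcomp Require Import ring.
Set Implicit Arguments. Unset Strict Implicit. Unset Printing Implicit Defensive.
Import Order.TTheory GRing.Theory Num.Theory ComplexField.
Local Open Scope ring_scope.

Section QuadraticForms.
Variable R : comNzRingType.

Definition qform (c0 c1 c2 x y : R) := c0 * y ^+ 2 + c1 * x * y + c2 * x ^+ 2.

Definition qjac (a0 a1 a2 b0 b1 b2 x y : R) :=
  (2 * a2 * x + a1 * y) * (b1 * x + 2 * b0 * y) -
  (a1 * x + 2 * a0 * y) * (2 * b2 * x + b1 * y).

Definition qform_of (f : R -> R -> R) := qform (f 0 1) (f 1 1 - f 1 0 - f 0 1) (f 1 0).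

Definition qjac_of (f g : R -> R -> R) :=
  qjac (f 0 1) (f 1 1 - f 1 0 - f 0 1) (f 1 0) (g 0 1) (g 1 1 - g 1 0 - g 0 1) (g 1 0).

Lemma qformM (c0 c1 c2 t x y : R) : qform c0 c1 c2 (t * x) (t * y) = t ^+ 2 * qform c0 c1 c2 x y.
Proof. rewrite /qform; ring. Qed.

Lemma qjacM (a0 a1 a2 b0 b1 b2 t x y : R) :
  qjac a0 a1 a2 b0 b1 b2 (t * x) (t * y) = t ^+ 2 * qjac a0 a1 a2 b0 b1 b2 x y.
Proof. rewrite /qjac; ring. Qed.

End QuadraticForms.

Section HomogeneousForms.
Variable R : comNzRingType.
Implicit Types (A : {poly R}) (x y c : R).

Definition homog (n : nat) A x y : R := \sum_(i < n.+1) A`_i * x ^+ i * y ^+ (n - i).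

Lemma homog_y1 n A x : (size A <= n.+1)%N -> homog n A x 1 = A.[x].
Proof.
move=> sA; rewrite /homog (horner_coef_wide _ sA); apply: eq_bigr => i _.
by rewrite expr1n mulr1.
Qed.

Lemma homog_10 n A : homog n A 1 0 = A`_n.
Proof.
rewrite /homog big_ord_recr /= subnn expr0 expr1n !mulr1 big1 ?add0r // => i _.
by rewrite expr0n subn_eq0 leqNgt ltn_ord /= mulr0.
Qed.

Lemma homogM n A c x y : homog n A (c * x) (c * y) = c ^+ n * homog n A x y.
Proof.
rewrite /homog mulr_sumr; apply: eq_bigr => i _.
have -> : c ^+ n = c ^+ i * c ^+ (n - i) by rewrite -exprD subnKC // -ltnS.
rewrite !exprMn; ring.
Qed.

Lemma homogZ n c A x y : homog n (c *: A) x y = c * homog n A x y.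
Proof. by rewrite /homog mulr_sumr; apply: eq_bigr => i _; rewrite coefZ !mulrA. Qed.

Lemma homog_x0 n A x : homog n A x 0 = x ^+ n * A`_n.
Proof.
have -> : homog n A x 0 = homog n A (x * 1) (x * 0) by rewrite mulr1 mulr0.
by rewrite homogM homog_10.
Qed.

Lemma homog1E A x y : homog 1 A x y = A`_0 * y + A`_1 * x.
Proof. by rewrite /homog !big_ord_recr big_ord0 /= add0r !expr0 !mulr1 expr1. Qed.

Lemma homog2E A x y : homog 2 A x y = qform A`_0 A`_1 A`_2 x y.
Proof. by rewrite /homog /qform !big_ord_recr big_ord0 /= add0r !expr0 !mulr1 expr1. Qed.

End HomogeneousForms.

Section HomogeneousCoordinates.
Variable F : fieldType.
Implicit Types (A : {poly F}) (x y c : F) (z w : option F).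

Lemma homog_div n A x y : y != 0 -> (size A <= n.+1)%N ->
  homog n A x y = y ^+ n * A.[x / y].
Proof.
by move=> y_neq0 sA; rewrite -(homog_y1 _ sA) -homogM mulr1 mulrC divfK.
Qed.

Definition of_hcoords x y : option F := if y == 0 then None else Some (x / y).
Definition hcoords z : F * F := if z is Some z0 then (z0, 1) else (1, 0).

Lemma hcoordsK z : of_hcoords (hcoords z).1 (hcoords z).2 = z.
Proof. by case: z => [z0|]; rewrite /of_hcoords /= ?oner_eq0 ?divr1 ?eqxx. Qed.

Lemma hcoords_neq0 z : ((hcoords z).1 != 0) || ((hcoords z).2 != 0).
Proof. by case: z => [z0|] /=; rewrite oner_eq0 ?orbT. Qed.

Lemma of_hcoordsM c x y : c != 0 -> of_hcoords (c * x) (c * y) = of_hcoords x y.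
Proof.
move=> c_neq0; rewrite /of_hcoords mulf_eq0 (negbTE c_neq0) orFb.
by case: eqP => // /eqP y_neq0; congr Some; field; apply/andP.
Qed.

Lemma of_hcoordsP x y : (x != 0) || (y != 0) ->
  exists2 c, c != 0 &
    x = c * (hcoords (of_hcoords x y)).1 /\ y = c * (hcoords (of_hcoords x y)).2.
Proof.
rewrite /of_hcoords; have [-> /=|y_neq0 _ /=] := eqVneq y 0.
  by rewrite orbF => x_neq0; exists x; rewrite ?mulr1 ?mulr0.
by exists y; rewrite // mulr1 mulrC divfK.
Qed.

Lemma hcoords_det_neq0 z w : z <> w ->
  (hcoords z).1 * (hcoords w).2 - (hcoords z).2 * (hcoords w).1 != 0.
Proof.
case: z => [z0|]; case: w => [w0|] //= zw.
- by rewrite !mulr1 !mul1r subr_eq0; apply: contra_not_neq zw => ->.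
- by rewrite mulr0 mul1r sub0r oppr_eq0 oner_eq0.
- by rewrite mul1r mul0r subr0 oner_eq0.
Qed.

Lemma lin_neq0 (a b c d x y : F) : a * d - b * c != 0 -> (x != 0) || (y != 0) ->
  (a * x + b * y != 0) || (c * x + d * y != 0).
Proof.
move=> det_neq0; apply: contraTT; rewrite negb_or !negbK => /andP[/eqP u0 /eqP v0].
have ex : (a * d - b * c) * x = d * (a * x + b * y) - b * (c * x + d * y) by ring.
have ey : (a * d - b * c) * y = a * (c * x + d * y) - c * (a * x + b * y) by ring.
rewrite u0 v0 !mulr0 subrr in ex ey.
move/eqP: ex; move/eqP: ey; rewrite !mulf_eq0 (negbTE det_neq0) /=.
by move=> /eqP-> /eqP->; rewrite eqxx.
Qed.

Definition nondeg (f g : F -> F -> F) :=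
  forall x y, (x != 0) || (y != 0) -> (f x y != 0) || (g x y != 0).

Definition lin_conj (H1 H2 N1 N2 : F -> F -> F) (a b c d k : F) :=
  forall x y, H1 (a * x + b * y) (c * x + d * y) = k * (a * N1 x y + b * N2 x y) /\
              H2 (a * x + b * y) (c * x + d * y) = k * (c * N1 x y + d * N2 x y).

Lemma nondeg_lin_conj (H1 H2 N1 N2 : F -> F -> F) (a b c d k : F) :
  a * d - b * c != 0 -> nondeg H1 H2 -> lin_conj H1 H2 N1 N2 a b c d k -> nondeg N1 N2.
Proof.
move=> det_neq0 nondegH conjHN x y xy_neq0.
apply: contraTT (nondegH _ _ (lin_neq0 det_neq0 xy_neq0)).
rewrite !negb_or !negbK (proj1 (conjHN x y)) (proj2 (conjHN x y)).
by case/andP=> /eqP-> /eqP->; rewrite !mulr0 addr0 mulr0 eqxx.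
Qed.

End HomogeneousCoordinates.

Section HomogeneousLift.
Variable F : fieldType.
Implicit Types (P Q A B W : {poly F}) (x y : F) (z : option F).

Lemma rnumK P Q : rnum P Q * gcdp P Q = P.
Proof. by rewrite /rnum divpK // dvdp_gcdl. Qed.

Lemma rdenK P Q : rden P Q * gcdp P Q = Q.
Proof. by rewrite /rden divpK // dvdp_gcdr. Qed.

Lemma rden_neq0 P Q : Q != 0 -> rden P Q != 0.
Proof. by apply: contraNneq => rden0; rewrite -(rdenK P Q) rden0 mul0r. Qed.

Lemma rnum_rden_coprime P Q : Q != 0 -> coprimep (rnum P Q) (rden P Q).
Proof. by move=> Q_neq0; apply: coprimep_div_gcd; rewrite Q_neq0 orbT. Qed.

Lemma size_rnum_le P Q : (size (rnum P Q) <= (rdeg P Q).+1)%N.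
Proof. exact: leq_trans (leq_maxl _ _) (leqSpred _). Qed.

Lemma size_rden_le P Q : (size (rden P Q) <= (rdeg P Q).+1)%N.
Proof. exact: leq_trans (leq_maxr _ _) (leqSpred _). Qed.

Lemma rnum_rden_mulr A B W : coprimep A B -> W != 0 ->
  exists2 c, c != 0 & rnum (A * W) (B * W) = c *: A /\ rden (A * W) (B * W) = c *: B.
Proof.
move=> coAB W_neq0.
have /eqpP[[c1 c2] /= /andP[c1_neq0 c2_neq0] c1c2E] : gcdp (A * W) (B * W) %= W.
  apply: eqp_trans (gcdp_mul2r A B W) _.
  by rewrite -{2}[W]mul1r eqp_mul2r // gcdp_eqp1.
have gcdE : gcdp (A * W) (B * W) = (c2 / c1) *: W.
  by rewrite (mulrC c2) -scalerA -c1c2E scalerA mulVf // scale1r.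
exists (c2 / c1)^-1; first by rewrite invr_eq0 mulf_neq0 ?invr_eq0.
by rewrite /rnum /rden gcdE !divpZr ?mulf_neq0 ?invr_eq0 // !mulpK.
Qed.

Lemma rderivE P Q t : Q.[t] != 0 ->
  rderiv P Q t = (P^`() * Q - P * Q^`()).[t] / Q.[t] ^+ 2.
Proof.
rewrite /rderiv; have := rnumK P Q; have := rdenK P Q.
move: (rnum P Q) (rden P Q) (gcdp P Q) => A B G <- <-.
rewrite !derivM !(hornerM, hornerD, hornerN) mulf_eq0 negb_or => /andP[B_neq0 G_neq0].
by field; apply/andP.
Qed.

Definition hnum P Q x y := homog (rdeg P Q) (rnum P Q) x y.
Definition hden P Q x y := homog (rdeg P Q) (rden P Q) x y.

Lemma reval_hcoords P Q z : Q != 0 ->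
  reval P Q z = of_hcoords (hnum P Q (hcoords z).1 (hcoords z).2)
                           (hden P Q (hcoords z).1 (hcoords z).2).
Proof.
move=> Q_neq0; have B_neq0 := rden_neq0 P Q_neq0.
have sA := size_rnum_le P Q; have sB := size_rden_le P Q.
rewrite /reval /hnum /hden; case: z => [z0|] /=; first by rewrite !homog_y1.
rewrite !homog_10 /of_hcoords; move: sA sB; rewrite /rdeg.
set A := rnum P Q; set B := rden P Q => sA sB.
have B_gt0 : (0 < size B)%N by rewrite size_poly_gt0.
case: ltngtP => sAB.
- by rewrite nth_default ?eqxx // -ltnS prednK // (leq_ltn_trans _ sAB).
- rewrite -/(lead_coef B) lead_coef_eq0 (negbTE B_neq0).
  by rewrite nth_default ?mul0r // -ltnS prednK.
- by rewrite -/(lead_coef B) lead_coef_eq0 (negbTE B_neq0) sAB -/(lead_coef A).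
Qed.

Lemma reval_of_hcoords P Q x y : Q != 0 -> (x != 0) || (y != 0) ->
  reval P Q (of_hcoords x y) = of_hcoords (hnum P Q x y) (hden P Q x y).
Proof.
move=> Q_neq0 /of_hcoordsP[c c_neq0]; rewrite reval_hcoords //.
move: (hcoords _) => [x1 y1] /= [-> ->].
by rewrite /hnum /hden !homogM of_hcoordsM // expf_neq0.
Qed.

Lemma nondeg_hlift P Q : Q != 0 -> nondeg (hnum P Q) (hden P Q).
Proof.
move=> Q_neq0 x y xy_neq0; have B_neq0 := rden_neq0 P Q_neq0.
rewrite /hnum /hden; have [y0|y_neq0] := eqVneq y 0.
  move: xy_neq0; rewrite y0 eqxx orbF => x_neq0.
  rewrite !homog_x0 !mulf_eq0 !negb_or !expf_eq0 (negbTE x_neq0) !andbF /= /rdeg.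
  have [sAB|sBA] := leqP (size (rnum P Q)) (size (rden P Q)).
    by rewrite -/(lead_coef _) lead_coef_eq0 B_neq0 orbT.
  rewrite -/(lead_coef _) lead_coef_eq0.
  by rewrite -size_poly_gt0 (leq_ltn_trans _ sBA).
rewrite !homog_div ?size_rnum_le ?size_rden_le //.
rewrite !mulf_eq0 !negb_or !expf_eq0 (negbTE y_neq0) !andbF /= -negb_and.
apply/negP => /andP[/eqP A0 /eqP B0].
case/Bezout_eq1_coprimepP: (rnum_rden_coprime P Q_neq0) => -[u v] /= /(congr1 (horner^~ (x / y))).
by rewrite !hornerE A0 B0 !mulr0 addr0 => /eqP; rewrite eq_sym oner_eq0.
Qed.

Lemma is_fixed_hlift P Q z : Q != 0 -> is_fixed P Q z ->
  exists2 mu, mu != 0 & hnum P Q (hcoords z).1 (hcoords z).2 = mu * (hcoords z).1 /\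
                        hden P Q (hcoords z).1 (hcoords z).2 = mu * (hcoords z).2.
Proof.
rewrite /is_fixed => Q_neq0; rewrite reval_hcoords // => fixed_z.
have /of_hcoordsP[mu mu_neq0] := nondeg_hlift P Q_neq0 (hcoords_neq0 z).
by rewrite fixed_z; exists mu.
Qed.

End HomogeneousLift.

Section Mobius.
Variables (F : fieldType) (a b c d : F).
Hypothesis det_neq0 : a * d - b * c != 0.

Let L : {poly F} := a *: 'X + b%:P.
Let L' : {poly F} := c *: 'X + d%:P.

Lemma mobius_den_neq0 : L' != 0.
Proof.
apply: contraNneq det_neq0 => L'0.
have /polyP/(_ 0%N) := L'0; have /polyP/(_ 1%N) := L'0.
rewrite !coefE /= mulr1 mulr0 addr0 add0r => -> ->.
by rewrite !mulr0 subrr.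
Qed.

Lemma mobius_lift : exists2 s, s != 0 &
  forall x y, hnum L L' x y = s * (a * x + b * y) /\ hden L L' x y = s * (c * x + d * y).
Proof.
have coLL' : coprimep L L'.
  apply/Bezout_eq1_coprimepP; exists ((- c / (a * d - b * c))%:P, (a / (a * d - b * c))%:P).
  by apply/polyP => -[|[|i]]; rewrite /= !coefE /=; field.
have [s s_neq0 [rnumE rdenE]] := rnum_rden_mulr coLL' (oner_neq0 _).
rewrite !mulr1 in rnumE rdenE.
have sizeE (u v : F) :
    size (u *: 'X + v%:P) = if (u == 0) && (v == 0) then 0%N else (u != 0).+1.
  by rewrite -mul_polyC size_MXaddC polyC_eq0 size_polyC.
have rdegE : rdeg L L' = 1%N.
  rewrite /rdeg rnumE rdenE !size_scale // !sizeE.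
  have [a0|a_neq0] := eqVneq a 0; have [c0|c_neq0] := eqVneq c 0 => //=.
  - by move: det_neq0; rewrite a0 c0 !mul0r mulr0 subrr eqxx.
  - by case: (d == 0); case: (b == 0).
  - by case: (b == 0); case: (d == 0).
exists s => // x y.
by rewrite /hnum /hden rdegE rnumE rdenE !homogZ !homog1E !coefE /=; split; ring.
Qed.

Lemma mobius_of_hcoords x y : (x != 0) || (y != 0) ->
  mobius a b c d (of_hcoords x y) = of_hcoords (a * x + b * y) (c * x + d * y).
Proof.
move=> xy_neq0; have [s s_neq0 liftE] := mobius_lift.
rewrite /mobius reval_of_hcoords ?mobius_den_neq0 //.
by rewrite (proj1 (liftE x y)) (proj2 (liftE x y)) of_hcoordsM.
Qed.

End Mobius.

Lemma mob_conjugate_hlift (F : fieldType) (P Q P' Q' : {poly F}) (a b c d k : F) :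
  Q != 0 -> Q' != 0 -> a * d - b * c != 0 -> k != 0 ->
  lin_conj (hnum P Q) (hden P Q) (hnum P' Q') (hden P' Q') a b c d k ->
  mob_conjugate (reval P Q) (reval P' Q').
Proof.
move=> Q_neq0 Q'_neq0 det_neq0 k_neq0 conjE; exists a, b, c, d; split=> // z.
rewrite -(hcoordsK z); move: (hcoords z) (hcoords_neq0 z) => [x y] /= xy_neq0.
rewrite mobius_of_hcoords // reval_of_hcoords ?lin_neq0 //.
rewrite (proj1 (conjE x y)) (proj2 (conjE x y)) of_hcoordsM //.
by rewrite reval_of_hcoords // mobius_of_hcoords // nondeg_hlift.
Qed.

Section QuadraticMultiplier.
Variables (F : numFieldType) (P Q : {poly F}).
Hypothesis rdeg2 : rdeg P Q = 2%N.
Local Notation A := (rnum P Q).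
Local Notation B := (rden P Q).

Lemma hnum_qform x y : hnum P Q x y = qform A`_0 A`_1 A`_2 x y.
Proof. by rewrite /hnum rdeg2 homog2E. Qed.

Lemma hden_qform x y : hden P Q x y = qform B`_0 B`_1 B`_2 x y.
Proof. by rewrite /hden rdeg2 homog2E. Qed.

(* Euler's identity for the quadratic lift gives [J = 2 (A' B - A B')] on the affine chart. *)
Lemma multiplier_qjac z mu : mu != 0 ->
  hnum P Q (hcoords z).1 (hcoords z).2 = mu * (hcoords z).1 ->
  hden P Q (hcoords z).1 (hcoords z).2 = mu * (hcoords z).2 ->
  multiplier P Q z =
    qjac A`_0 A`_1 A`_2 B`_0 B`_1 B`_2 (hcoords z).1 (hcoords z).2 / (2 * mu ^+ 2).
Proof.
move=> mu_neq0; rewrite hnum_qform hden_qform.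
have sA : (size A <= 3)%N by rewrite -rdeg2 size_rnum_le.
have sB : (size B <= 3)%N by rewrite -rdeg2 size_rden_le.
have hornerE2 (C : {poly F}) t : (size C <= 3)%N -> C.[t] = qform C`_0 C`_1 C`_2 t 1.
  by move=> sC; rewrite -homog2E homog_y1.
have derivE2 (C : {poly F}) t : (size C <= 3)%N -> C^`().[t] = C`_1 + C`_2 *+ 2 * t.
  move=> sC; have sC' : (size C^`() <= 2)%N.
    by apply: leq_trans (size_poly _ _) _; case: (size C) sC => [|[|[|[|]]]].
  by rewrite -(homog_y1 _ sC') homog1E !coef_deriv mulr1 addrC mulrC.
case: z => [t|] /=.
  rewrite mulr1 => _ Bt.
  rewrite /rderiv !(hornerM, hornerD, hornerN) !derivE2 // !hornerE2 // -Bt in mu_neq0 *.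
  by move: mu_neq0; rewrite /qjac /qform expr1n !mulr1 => Bt_neq0; field.
rewrite -/(rdeg P Q) rdeg2 /qform !expr0n /= !mulr0 !add0r !expr1n !mulr1 => A2 B2.
have recipA0 : (recip 2 A).[0] = A`_2 by rewrite horner_coef0 /recip coef_poly.
rewrite rderivE ?recipA0 ?A2 //.
rewrite !(hornerM, hornerN, hornerD) !horner_coef0 !coef_deriv /recip !coef_poly /=.
by rewrite /qjac A2 B2 !mulr1n; field.
Qed.

End QuadraticMultiplier.

(* The eigenlines (1,0), (1,1), (-1,1) leave one free coefficient, fixed by the two indices. *)
Lemma quad_normal_form (F : numFieldType) (g e : F -> F -> F) (n1 n2 K M h : F) :
  (forall x y, qform_of g x y = g x y) -> (forall x y, qform_of e x y = e x y) ->
  n1 != 0 -> n2 != 0 -> h != 0 -> K != 0 ->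
  e 1 0 = 0 -> g 1 1 = n1 -> e 1 1 = n1 -> g (-1) 1 = - n2 -> e (-1) 1 = n2 ->
  (1 - qjac_of g e 1 1 / (2 * n1 ^+ 2))^-1 = K / h ->
  (1 - qjac_of g e (-1) 1 / (2 * n2 ^+ 2))^-1 = M / h ->
  exists2 k, k != 0 & forall x y,
    g x y = k * qform h (K - M) (K + M - h) x y /\ e x y = k * qform (K - M) (K + M) 0 x y.
Proof.
move=> gE eE n1_neq0 n2_neq0 h_neq0 K_neq0 e10 g11 e11 g_11 e_11 res1 res2.
suff [k k_neq0 kE] : exists2 k, k != 0 & forall x y,
    qform_of g x y = k * qform h (K - M) (K + M - h) x y /\
    qform_of e x y = k * qform (K - M) (K + M) 0 x y.
  by exists k => // x y; rewrite -gE -eE.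
move: e10 g11 e11 g_11 e_11 res1 res2.
rewrite -[e 1 0]eE -[g 1 1]gE -[e 1 1]eE -[g (-1) 1]gE -[e (-1) 1]eE /qform_of /qjac_of.
move: (g 1 1 - g 1 0 - g 0 1) (e 1 1 - e 1 0 - e 0 1) => g1 e1.
move: (g 0 1) (g 1 0) (e 0 1) (e 1 0) => g0 g2 e0 e2 e10 g11 e11 g_11 e_11.
have e2E : e2 = 0 by apply: etrans e10; rewrite /qform; ring.
have g1E : g1 = (n1 + n2) / 2 by rewrite -g11 -[n2]opprK -g_11 /qform; field.
have g2E : g2 = (n1 - n2) / 2 - g0 by rewrite -g11 -[n2]opprK -g_11 /qform; field.
have e1E : e1 = (n1 - n2) / 2 by rewrite -e11 -e_11 /qform e2E; field.
have e0E : e0 = (n1 + n2) / 2 by rewrite -e11 -e_11 /qform e2E; field.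
rewrite g1E g2E e1E e0E e2E.
set G := qjac g0 _ _ _ _ _.
have -> : 1 - G 1 1 / (2 * n1 ^+ 2) = 2 * g0 / n1 by rewrite /G /qjac; field.
have -> : 1 - G (-1) 1 / (2 * n2 ^+ 2) = - (2 * g0) / n2 by rewrite /G /qjac; field.
rewrite !invf_div => n1E n2E.
have g0_neq0 : g0 != 0.
  apply: contra_eq_neq n1E => ->.
  by rewrite mulr0 invr0 mulr0 eq_sym mulf_neq0 ?invr_eq0.
have {}n1E : n1 = 2 * g0 * (K / h) by rewrite -n1E; field.
have {}n2E : n2 = - (2 * g0) * (M / h) by rewrite -n2E; field.
exists (g0 / h); first by rewrite mulf_neq0 ?invr_eq0.
by move=> x y; rewrite /qform n1E n2E; split; field.
Qed.

Section Conjugation.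
Variables (F : numFieldType) (a0 a1 a2 b0 b1 b2 a b c d : F).
Local Notation H1 := (qform a0 a1 a2).
Local Notation H2 := (qform b0 b1 b2).
Local Notation det := (a * d - b * c).

(* [(qconj1, qconj2) = adj M o H o M], i.e. [det M] times the conjugate of [H] by [M]. *)
Definition qconj1 (x y : F) :=
  d * H1 (a * x + b * y) (c * x + d * y) - b * H2 (a * x + b * y) (c * x + d * y).
Definition qconj2 (x y : F) :=
  a * H2 (a * x + b * y) (c * x + d * y) - c * H1 (a * x + b * y) (c * x + d * y).

Lemma qconj1E x y : qform_of qconj1 x y = qconj1 x y.
Proof. rewrite /qform_of /qconj1 /qform; ring. Qed.

Lemma qconj2E x y : qform_of qconj2 x y = qconj2 x y.
Proof. rewrite /qform_of /qconj2 /qform; ring. Qed.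

Lemma qconj_adj x y :
  a * qconj1 x y + b * qconj2 x y = det * H1 (a * x + b * y) (c * x + d * y) /\
  c * qconj1 x y + d * qconj2 x y = det * H2 (a * x + b * y) (c * x + d * y).
Proof. by rewrite /qconj1 /qconj2; split; ring. Qed.

Lemma qjac_qconj x y :
  qjac_of qconj1 qconj2 x y =
  det ^+ 2 * qjac a0 a1 a2 b0 b1 b2 (a * x + b * y) (c * x + d * y).
Proof. rewrite /qjac_of /qjac /qconj1 /qconj2 /qform; ring. Qed.

Lemma qconj_fixed x y x0 y0 mu s : mu != 0 -> s != 0 -> det != 0 ->
  H1 x0 y0 = mu * x0 -> H2 x0 y0 = mu * y0 ->
  a * x + b * y = s * x0 -> c * x + d * y = s * y0 ->
  [/\ qconj1 x y = s * mu * det * x, qconj2 x y = s * mu * det * y &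
       qjac_of qconj1 qconj2 x y / (2 * (s * mu * det) ^+ 2) =
         qjac a0 a1 a2 b0 b1 b2 x0 y0 / (2 * mu ^+ 2)].
Proof.
move=> mu_neq0 s_neq0 det_neq0 Hx0 Hy0 Mx My.
rewrite qjac_qconj /qconj1 /qconj2 Mx My !qformM qjacM Hx0 Hy0.
split.
- transitivity (s * mu * (d * (s * x0) - b * (s * y0))); first by ring.
  by rewrite -Mx -My; ring.
- transitivity (s * mu * (a * (s * y0) - c * (s * x0))); first by ring.
  by rewrite -Mx -My; ring.
- by field; rewrite mu_neq0 s_neq0 det_neq0.
Qed.

End Conjugation.

Lemma three_point_frame (F : numFieldType) (x1 y1 x2 y2 x3 y3 : F) :
  x1 * y2 - y1 * x2 != 0 -> x1 * y3 - y1 * x3 != 0 -> x2 * y3 - y2 * x3 != 0 ->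
  exists a b c d s1 s2 s3 : F, [/\ a * d - b * c != 0, s1 != 0, s2 != 0, s3 != 0 &
    [/\ a + b = s1 * x1 /\ c + d = s1 * y1, b - a = s2 * x2 /\ d - c = s2 * y2 &
        a = s3 * x3 /\ c = s3 * y3]].
Proof.
(* With [Dij = det (vi, vj)], [D23 v1 + D31 v2 + D12 v3 = 0]; hence the choice of [s3] makes
   [M (-1,1) = M (1,1) - 2 M (1,0)] a multiple of [v2]. *)
move=> D12 D13 D23; set s3 := - (x1 * y2 - y1 * x2) / 2; set s1 := x2 * y3 - y2 * x3.
have s3_neq0 : s3 != 0 by rewrite mulf_neq0 ?oppr_eq0 ?invr_eq0 ?pnatr_eq0.
exists (s3 * x3), (s1 * x1 - s3 * x3), (s3 * y3), (s1 * y1 - s3 * y3).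
exists s1, (x1 * y3 - y1 * x3), s3; split=> //.
  have -> : s3 * x3 * (s1 * y1 - s3 * y3) - (s1 * x1 - s3 * x3) * (s3 * y3) =
            - (s3 * s1 * (x1 * y3 - y1 * x3)) by ring.
  by rewrite oppr_eq0 (mulf_neq0 (mulf_neq0 s3_neq0 D23) D13).
by split; split; rewrite /s1 /s3; field.
Qed.

Section NormalizingFrame.
Variables (F : numFieldType) (a0 a1 a2 b0 b1 b2 : F).
Local Notation H1 := (qform a0 a1 a2).
Local Notation H2 := (qform b0 b1 b2).
Variables (x1 y1 x2 y2 x3 y3 mu1 mu2 mu3 : F).
Hypotheses (H1_1 : H1 x1 y1 = mu1 * x1) (H2_1 : H2 x1 y1 = mu1 * y1).
Hypotheses (H1_2 : H1 x2 y2 = mu2 * x2) (H2_2 : H2 x2 y2 = mu2 * y2).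
Hypotheses (H1_3 : H1 x3 y3 = mu3 * x3) (H2_3 : H2 x3 y3 = mu3 * y3).
Hypotheses (mu1_neq0 : mu1 != 0) (mu2_neq0 : mu2 != 0) (mu3_neq0 : mu3 != 0).
Hypotheses (D12 : x1 * y2 - y1 * x2 != 0) (D13 : x1 * y3 - y1 * x3 != 0)
           (D23 : x2 * y3 - y2 * x3 != 0).

Lemma quad_conj_normal_form (K M h : F) : h != 0 -> K != 0 ->
  (1 - qjac a0 a1 a2 b0 b1 b2 x1 y1 / (2 * mu1 ^+ 2))^-1 = K / h ->
  (1 - qjac a0 a1 a2 b0 b1 b2 x2 y2 / (2 * mu2 ^+ 2))^-1 = M / h ->
  exists a b c d k : F, [/\ a * d - b * c != 0, k != 0 &
    lin_conj H1 H2 (qform h (K - M) (K + M - h)) (qform (K - M) (K + M) 0) a b c d k].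
Proof.
move=> h_neq0 K_neq0 res1 res2.
have [a [b [c [d [s1 [s2 [s3 [det_neq0 s1_neq0 s2_neq0 s3_neq0]]]]]]]] :=
  three_point_frame D12 D13 D23.
case=> -[M1 M1'] [M2 M2'] [M3 M3'].
have [M1x M1y] : a * 1 + b * 1 = s1 * x1 /\ c * 1 + d * 1 = s1 * y1 by rewrite !mulr1.
have [M2x M2y] : a * -1 + b * 1 = s2 * x2 /\ c * -1 + d * 1 = s2 * y2.
  by rewrite -M2 -M2'; split; ring.
have [M3x M3y] : a * 1 + b * 0 = s3 * x3 /\ c * 1 + d * 0 = s3 * y3.
  by rewrite -M3 -M3'; split; ring.
have [G1_1 G2_1 J1] := qconj_fixed mu1_neq0 s1_neq0 det_neq0 H1_1 H2_1 M1x M1y.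
have [G1_2 G2_2 J2] := qconj_fixed mu2_neq0 s2_neq0 det_neq0 H1_2 H2_2 M2x M2y.
have [_ G2_3 _] := qconj_fixed mu3_neq0 s3_neq0 det_neq0 H1_3 H2_3 M3x M3y.
rewrite -J1 in res1; rewrite -J2 in res2.
have [k k_neq0 normalE] := quad_normal_form (qconj1E a0 a1 a2 b0 b1 b2 a b c d)
  (qconj2E a0 a1 a2 b0 b1 b2 a b c d)
  (mulf_neq0 (mulf_neq0 s1_neq0 mu1_neq0) det_neq0)
  (mulf_neq0 (mulf_neq0 s2_neq0 mu2_neq0) det_neq0) h_neq0 K_neq0
  (etrans G2_3 (mulr0 _)) (etrans G1_1 (mulr1 _)) (etrans G2_1 (mulr1 _))
  (etrans G1_2 (mulrN1 _)) (etrans G2_2 (mulr1 _)) res1 res2.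
exists a, b, c, d, (k / (a * d - b * c)); split=> [//||x y].
- by rewrite mulf_neq0 ?invr_eq0.
have [adj1 adj2] := qconj_adj a0 a1 a2 b0 b1 b2 a b c d x y.
have [N1 N2] := normalE x y.
by split; apply: (mulfI det_neq0); rewrite -?adj1 -?adj2 N1 N2; field.
Qed.

End NormalizingFrame.

Definition newton_poly (F : numFieldType) (k m : nat) : {poly F} :=
  ('X - 1) ^+ k * ('X + 1) ^+ m.

Section NewtonNormalForm.
Variables (F : numFieldType) (k m : nat) (h : F).
Hypotheses (k_gt0 : (0 < k)%N) (m_gt0 : (0 < m)%N).
Local Notation p := (newton_poly F k m).
Local Notation N1 := (qform h (k%:R - m%:R) (k%:R + m%:R - h)).
Local Notation N2 := (qform (k%:R - m%:R) (k%:R + m%:R) 0).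

Let V : {poly F} := ('X + 1) *+ k + ('X - 1) *+ m.
Let U : {poly F} := 'X * V - h *: ('X ^+ 2 - 1).
Let W : {poly F} := ('X - 1) ^+ k.-1 * ('X + 1) ^+ m.-1.

Let newton_factor : newton_den p = V * W /\ newton_num h p = U * W.
Proof.
have Xk : ('X - 1 : {poly F}) ^+ k = ('X - 1) * ('X - 1) ^+ k.-1 by rewrite -exprS prednK.
have Xm : ('X + 1 : {poly F}) ^+ m = ('X + 1) * ('X + 1) ^+ m.-1 by rewrite -exprS prednK.
have denE : newton_den p = V * W.
  by rewrite /newton_den /newton_poly /V /W derivM !deriv_exp !derivE Xk Xm; ring.
split=> //; rewrite /newton_num -/(newton_den p) denE /U /W /newton_poly Xk Xm.
by rewrite -!mul_polyC; ring.
Qed.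

Let coefV j : V`_j = if j == 0%N then k%:R - m%:R else if j == 1%N then k%:R + m%:R else 0.
Proof. by rewrite /V !coefE; case: j => [|[|j]] /=; ring. Qed.

Let coefU j : U`_j = if j == 0%N then h else if j == 1%N then k%:R - m%:R
  else if j == 2%N then k%:R + m%:R - h else 0.
Proof. by rewrite /U !coefE; case: j => [|[|[|j]]] /=; rewrite ?coefV /=; ring. Qed.

(* Without [nondeg N1 N2], [U] and [V] may share a root and [N_{h,p}] drop to degree 1. *)
Lemma newton_hlift : nondeg N1 N2 ->
  exists2 s, s != 0 & newton_den p != 0 /\ forall x y,
    hnum (newton_num h p) (newton_den p) x y = s * N1 x y /\
    hden (newton_num h p) (newton_den p) x y = s * N2 x y.
Proof.
move=> nondegN; have [denE numE] := newton_factor.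
have km_neq0 : (k%:R + m%:R : F) != 0.
  by rewrite -natrD pnatr_eq0 addn_eq0 negb_and -!lt0n k_gt0.
have U2_neq0 : k%:R + m%:R - h != 0.
  have := nondegN 1 0; rewrite oner_eq0 /qform expr0n /= !mulr0 !add0r !expr1n !mulr1.
  by rewrite eqxx orbF; apply.
have sU : size U = 3%N.
  apply/eqP; rewrite eqn_leq; apply/andP; split.
    by apply/leq_sizeP => -[|[|[|j]]] //; rewrite coefU.
  rewrite ltnNge; apply: contra U2_neq0 => /leq_sizeP/(_ 2%N (leqnn _)).
  by rewrite coefU /= => ->.
have sV : (size V <= 3)%N by apply/leq_sizeP => -[|[|[|j]]] //; rewrite coefV.
pose z0 := - (k%:R - m%:R) / (k%:R + m%:R) : F.
have VE : V = (k%:R + m%:R) *: ('X - z0%:P).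
  by apply/polyP => -[|[|i]]; rewrite coefV !coefE /= /z0; field.
have N2z0 : N2 z0 1 = 0 by rewrite /qform /z0; field.
have N1z0 : N1 z0 1 != 0.
  by have := nondegN z0 1; rewrite oner_eq0 orbT N2z0 eqxx orbF; apply.
have coUV : coprimep U V.
  rewrite VE coprimepZr // coprimep_XsubC /root -(homog_y1 _ (eq_leq sU)) homog2E.
  by rewrite !coefU.
have W_neq0 : W != 0.
  by rewrite mulf_neq0 // expf_neq0 // -size_poly_gt0 ?size_XsubC ?size_XaddC.
have [s s_neq0 [rnumE rdenE]] := rnum_rden_mulr coUV W_neq0.
have rdegE : rdeg (newton_num h p) (newton_den p) = 2%N.
  by rewrite /rdeg numE denE rnumE rdenE !size_scale // sU (maxn_idPl sV).
exists s => //; split.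
  by rewrite denE mulf_neq0 // VE scaler_eq0 negb_or km_neq0 -size_poly_gt0 size_XsubC.
move=> x y; rewrite /hnum /hden rdegE numE denE rnumE rdenE !homogZ !homog2E.
by rewrite !coefU !coefV.
Qed.

End NewtonNormalForm.

Lemma multiplier_neq1 (F : numFieldType) (P Q : {poly F}) z :
  `|multiplier P Q z| < 1 -> multiplier P Q z != 1.
Proof. by apply: contraTneq => ->; rewrite normr1 ltxx. Qed.

Lemma residue_index_neq0 (F : numFieldType) (P Q : {poly F}) z :
  `|multiplier P Q z| < 1 -> residue_index P Q z != 0.
Proof. by move/multiplier_neq1; rewrite invr_eq0 subr_eq0 eq_sym. Qed.

Section Classification.
Variables (F : numFieldType) (P Q : {poly F}) (z1 z2 z3 : option F).
Hypotheses (Q_neq0 : Q != 0) (rdeg2 : rdeg P Q = 2%N).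
Hypotheses (fixed1 : is_fixed P Q z1) (fixed2 : is_fixed P Q z2) (fixed3 : is_fixed P Q z3).
Hypotheses (z12 : z1 <> z2) (z13 : z1 <> z3) (z23 : z2 <> z3).

Lemma conj_newton_of_residue_indices (k m : nat) (h : F) :
  (0 < k)%N -> (0 < m)%N -> h != 0 ->
  residue_index P Q z1 = k%:R / h -> residue_index P Q z2 = m%:R / h ->
  mob_conjugate (reval P Q)
    (reval (newton_num h (newton_poly F k m)) (newton_den (newton_poly F k m))).
Proof.
move=> k_gt0 m_gt0 h_neq0.
have [mu1 mu1_neq0 [H1_1 H2_1]] := is_fixed_hlift Q_neq0 fixed1.
have [mu2 mu2_neq0 [H1_2 H2_2]] := is_fixed_hlift Q_neq0 fixed2.
have [mu3 mu3_neq0 [H1_3 H2_3]] := is_fixed_hlift Q_neq0 fixed3.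
rewrite /residue_index (multiplier_qjac rdeg2 mu1_neq0 H1_1 H2_1).
rewrite (multiplier_qjac rdeg2 mu2_neq0 H1_2 H2_2) => res1 res2.
rewrite !hnum_qform // !hden_qform // in H1_1 H2_1 H1_2 H2_2 H1_3 H2_3.
have K_neq0 : (k%:R : F) != 0 by rewrite pnatr_eq0 -lt0n.
have [a [b [c [d [kap [det_neq0 kap_neq0 conjHN]]]]]] :=
  quad_conj_normal_form H1_1 H2_1 H1_2 H2_2 H1_3 H2_3 mu1_neq0 mu2_neq0 mu3_neq0
    (hcoords_det_neq0 z12) (hcoords_det_neq0 z13) (hcoords_det_neq0 z23) h_neq0 K_neq0 res1 res2.
have {}conjHN : lin_conj (hnum P Q) (hden P Q) (qform h (k%:R - m%:R) (k%:R + m%:R - h))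
    (qform (k%:R - m%:R) (k%:R + m%:R) 0) a b c d kap.
  by move=> x y; rewrite hnum_qform // hden_qform //; exact: conjHN.
have [s s_neq0 [den_neq0 newtonE]] := newton_hlift k_gt0 m_gt0
  (nondeg_lin_conj det_neq0 (nondeg_hlift P Q_neq0) conjHN).
apply: (mob_conjugate_hlift (k := kap / s) Q_neq0 den_neq0 det_neq0).
  by rewrite mulf_neq0 ?invr_eq0.
move=> x y; rewrite !(proj1 (newtonE _ _)) !(proj2 (newtonE _ _)).
by rewrite (proj1 (conjHN x y)) (proj2 (conjHN x y)); split; field.
Qed.

Hypotheses (attracting1 : `|multiplier P Q z1| < 1) (attracting2 : `|multiplier P Q z2| < 1).

Lemma conj_newton_equal_multipliers lam :
  multiplier P Q z1 = lam -> multiplier P Q z2 = lam ->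
  mob_conjugate (reval P Q)
    (reval (newton_num (1 - lam) ('X^2 - 1)) (newton_den ('X^2 - 1))).
Proof.
move=> mult1 mult2; have lam_neq1 : 1 - lam != 0.
  by rewrite subr_eq0 eq_sym -mult1 multiplier_neq1.
have -> : ('X^2 - 1 : {poly F}) = newton_poly F 1 1 by rewrite /newton_poly !expr1; ring.
by apply: conj_newton_of_residue_indices; rewrite // /residue_index ?mult1 ?mult2 div1r.
Qed.

Lemma conj_newton_superattracting (m n : nat) : (0 < m)%N -> (0 < n)%N ->
  multiplier P Q z1 = 0 -> multiplier P Q z2 = n%:R / m%:R ->
  mob_conjugate (reval P Q) (reval (newton_num (m%:R - n%:R) (newton_poly F (m - n) m))
                                   (newton_den (newton_poly F (m - n) m))).
Proof.
move=> m_gt0 n_gt0 mult1 mult2.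
have m_neq0 : (m%:R : F) != 0 by rewrite pnatr_eq0 -lt0n.
have n_lt_m : (n < m)%N.
  move: attracting2; rewrite mult2 ger0_norm ?divr_ge0 ?ler0n //.
  by rewrite ltr_pdivrMr ?ltr0n // mul1r ltr_nat.
have mn_neq0 : (m%:R - n%:R : F) != 0.
  by rewrite -natrB ?(ltnW n_lt_m) // pnatr_eq0 -lt0n subn_gt0.
apply: conj_newton_of_residue_indices; rewrite ?subn_gt0 // /residue_index.
  by rewrite mult1 subr0 invr1 natrB ?(ltnW n_lt_m) // divff // -natrB ?(ltnW n_lt_m).
rewrite mult2 (_ : 1 - n%:R / m%:R = (m%:R - n%:R) / (m%:R : F)) ?invf_div //.
by field.
Qed.

Lemma conj_newton_index_ratio (k m : nat) : (0 < m)%N ->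
  residue_index P Q z1 / residue_index P Q z2 = k%:R / m%:R ->
  exists h, h != 0 /\ mob_conjugate (reval P Q)
    (reval (newton_num h (newton_poly F k m)) (newton_den (newton_poly F k m))).
Proof.
move=> m_gt0 ratio.
have i1_neq0 := residue_index_neq0 attracting1.
have i2_neq0 := residue_index_neq0 attracting2.
have k_neq0 : (k%:R : F) != 0.
  by apply: contra_eq_neq ratio => ->; rewrite mul0r mulf_neq0 // invr_eq0.
have m_neq0 : (m%:R : F) != 0 by rewrite pnatr_eq0 -lt0n.
have h_neq0 : k%:R / residue_index P Q z1 != 0 by rewrite mulf_neq0 // invr_eq0.
exists (k%:R / residue_index P Q z1); split=> //.
apply: conj_newton_of_residue_indices => //.
- by rewrite lt0n -(pnatr_eq0 F).
- by field; rewrite i1_neq0 k_neq0.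
- rewrite -(divfK i2_neq0 (residue_index P Q z1)) ratio.
  by field; rewrite i2_neq0 k_neq0 m_neq0.
Qed.

End Classification.

Theorem mainTheorem8 (P Q : {poly CC}) (a1 a2 r : option CC) :
  Q != 0 -> rdeg P Q = 2%N ->
  is_fixed P Q a1 -> is_fixed P Q a2 -> is_fixed P Q r ->
  a1 <> a2 -> a1 <> r -> a2 <> r ->
  `|multiplier P Q a1| < 1 -> `|multiplier P Q a2| < 1 ->
  1 < `|multiplier P Q r| ->
  (* (i) *)
  (forall lam : CC, multiplier P Q a1 = lam -> multiplier P Q a2 = lam ->
     mob_conjugate (reval P Q)
       (reval (newton_num (1 - lam) ('X^2 - 1)) (newton_den ('X^2 - 1))))
  /\
  (* (ii) *)
  (forall m n : nat, (0 < m)%N -> (0 < n)%N ->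
     multiplier P Q a1 = 0 -> multiplier P Q a2 = n%:R / m%:R ->
     let p := ('X - 1) ^+ (m - n) * ('X + 1) ^+ m in
     mob_conjugate (reval P Q)
       (reval (newton_num (m%:R - n%:R) p) (newton_den p)))
  /\
  (* (iii) *)
  (forall k m : nat, (0 < m)%N ->
     residue_index P Q a1 / residue_index P Q a2 = k%:R / m%:R ->
     let p := ('X - 1) ^+ k * ('X + 1) ^+ m in
     exists h : CC, h != 0 /\
       mob_conjugate (reval P Q) (reval (newton_num h p) (newton_den p))).
Proof.
move=> Q_neq0 rdeg2 fixed1 fixed2 fixed3 a12 a1r a2r attracting1 attracting2 _.
split; [|split].
- exact: conj_newton_equal_multipliers Q_neq0 rdeg2 fixed1 fixed2 fixed3 a12 a1r a2r
    attracting1.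
- exact: conj_newton_superattracting Q_neq0 rdeg2 fixed1 fixed2 fixed3 a12 a1r a2r
    attracting2.
- exact: conj_newton_index_ratio Q_neq0 rdeg2 fixed1 fixed2 fixed3 a12 a1r a2r
    attracting1 attracting2.
Qed.
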